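(* Let $A$ be a commutative ring and $C$ a commutative noetherian $A$-algebra. If a $D(C,A)$-module $M$ has finite length in the category of $D(C,A)$-modules, then $M$ has only finitely many associated primes as a $C$-module; moreover, every simple $D(C,A)$-module has exactly one associated prime as a $C$-module.
   Context: $D(C,A)$ denotes the ring of $A$-linear differential operators on $C$: for $r\in C$, multiplication by $r$ is a differential operator of order $0$; an additive map $\delta:C\to C$ is a differential operator of order $\le n$ ($n\ge1$) if all commutators $r\circ\delta-\delta\circ r$ ($r\in C$) have order $\le n-1$; $D(C,A)$ consists of all such operators that are $A$-linear. *)

From HB Require Import structures.
From mathcomp Require Import all_boot all_order all_algebra.
Set Implicit Arguments. Unset Strict Implicit. Unset Printing Implicit Defensive.
Import GRing.Theory.
Local Open Scope ring_scope.

Definition is_ideal (C : comPzRingType) (I : C -> Prop) : Prop :=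
  [/\ I 0, (forall x y, I x -> I y -> I (x + y)) & (forall r x, I x -> I (r * x))].

Definition is_prime_ideal (C : comPzRingType) (P : C -> Prop) : Prop :=
  [/\ is_ideal P, ~ P 1 & (forall x y, P (x * y) -> P x \/ P y)].

Definition noetherian (C : comPzRingType) : Prop :=
  forall I : nat -> C -> Prop,
    (forall n, is_ideal (I n)) ->
    (forall n x, I n x -> I n.+1 x) ->
    exists N, forall n, (N <= n)%N -> forall x, I n x <-> I N x.

Definition additive_map (C : comPzRingType) (d : C -> C) : Prop :=
  forall x y, d (x + y) = d x + d y.

Fixpoint diff_order_le (C : comPzRingType) (n : nat) (d : C -> C) : Prop :=
  match n with
  | 0%N => exists r : C, forall x, d x = r * x
  | k.+1 => additive_map d /\
            forall r : C, diff_order_le k (fun x => r * d x - d (r * x))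
  end.

Definition A_linear (A C : comPzRingType) (f : {rmorphism A -> C}) (d : C -> C) :=
  forall (a : A) (x : C), d (f a * x) = f a * d x.

Definition in_DCA (A C : comPzRingType) (f : {rmorphism A -> C}) (d : C -> C) :=
  [/\ additive_map d, A_linear f d & exists n, diff_order_le n d].

(* act d m is the action of d in D(C,A) on m; only its values on d in D(C,A)
   are meaningful. The ring structure of D(C,A) is pointwise addition and
   composition, with unit the identity. *)
Definition is_DCA_module (A C : comPzRingType) (f : {rmorphism A -> C})
    (M : zmodType) (act : (C -> C) -> M -> M) : Prop :=
  [/\ (forall d e, in_DCA f d -> (forall x, d x = e x) -> forall m, act d m = act e m),
      forall d, in_DCA f d -> forall m1 m2, act d (m1 + m2) = act d m1 + act d m2,
      forall d e, in_DCA f d -> in_DCA f e ->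
        forall m, act (fun x => d x + e x) m = act d m + act e m,
      forall d e, in_DCA f d -> in_DCA f e ->
        forall m, act (fun x => d (e x)) m = act d (act e m)
    & forall m, act id m = m].

Definition is_Dsubmodule (A C : comPzRingType) (f : {rmorphism A -> C})
    (M : zmodType) (act : (C -> C) -> M -> M) (N : M -> Prop) : Prop :=
  [/\ N 0, (forall x y, N x -> N y -> N (x - y))
    & (forall d x, in_DCA f d -> N x -> N (act d x))].

Definition sub_pred (M : Type) (N N' : M -> Prop) := forall x, N x -> N' x.

Definition simple_step (A C : comPzRingType) (f : {rmorphism A -> C})
    (M : zmodType) (act : (C -> C) -> M -> M) (N' N : M -> Prop) : Prop :=
  [/\ sub_pred N' N, ~ sub_pred N N' &
      forall L, is_Dsubmodule f act L -> sub_pred N' L -> sub_pred L N ->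
        sub_pred L N' \/ sub_pred N L].

Definition finite_length_D (A C : comPzRingType) (f : {rmorphism A -> C})
    (M : zmodType) (act : (C -> C) -> M -> M) : Prop :=
  exists (n : nat) (S : nat -> M -> Prop),
    [/\ forall i, is_Dsubmodule f act (S i),
        (forall x, S 0%N x <-> x = 0),
        (forall x, S n x) &
        forall i, (i < n)%N -> simple_step f act (S i) (S i.+1)].

Definition simple_D (A C : comPzRingType) (f : {rmorphism A -> C})
    (M : zmodType) (act : (C -> C) -> M -> M) : Prop :=
  (exists m : M, m <> 0) /\
  forall L, is_Dsubmodule f act L -> (forall x, L x -> x = 0) \/ (forall x, L x).

Definition cact (C : comPzRingType) (M : zmodType) (act : (C -> C) -> M -> M)
    (r : C) (m : M) : M := act (fun x => r * x) m.

Definition associated_prime (C : comPzRingType) (M : zmodType)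
    (act : (C -> C) -> M -> M) (P : C -> Prop) : Prop :=
  is_prime_ideal P /\ exists m : M, forall r, P r <-> cact act r m = 0.

From HB Require Import structures.
From mathcomp Require Import all_boot all_order all_algebra.
From Stdlib Require List.
From Stdlib Require Import Classical ClassicalEpsilon FunctionalExtensionality.
Set Implicit Arguments. Unset Strict Implicit. Unset Printing Implicit Defensive.
Import GRing.Theory.
Local Open Scope ring_scope.

(* For a D-submodule S and a prime P, the elements x with P^n x contained in S
   for some n form a D-submodule: a differential operator d of order k raises n
   by at most k, since p (d x) = [p, d] x + d (p x) and [p, d] has order k - 1.
   In a simple module this torsion submodule is everything as soon as P is
   associated, so any two associated primes contain each other, and a maximal
   annihilator (C is noetherian) is an associated prime. Along a composition
   series S_0 < ... < S_n, an associated prime P = ann m with m in S_(i+1) is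
   either the ideal of elements acting locally nilpotently on S_(i+1)/S_i, or
   some r^k outside P moves m into S_i without changing its annihilator; so
   there are at most n associated primes. *)

Section IdealTheory.
Variable C : comPzRingType.

Lemma noetherian_maximal (F : (C -> Prop) -> Prop) : noetherian C ->
  (forall I, F I -> is_ideal I) -> (exists I, F I) ->
  exists2 I, F I & forall J, F J -> sub_pred I J -> sub_pred J I.
Proof.
move=> HC Fideal [I0 FI0]; apply: NNPP => no_max.
have grow : forall I : {I | F I}, exists J : {J | F J},
    sub_pred (sval I) (sval J) /\ ~ sub_pred (sval J) (sval I).
  case=> I FI; apply: NNPP => H; apply: no_max; exists I => // J FJ IJ.
  by apply: NNPP => JI; apply: H; exists (exist _ J FJ).
have [g Hg] := choice _ grow.
pose u n := sval (iter n g (exist _ I0 FI0)).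
have [N HN] : exists N, forall n, (N <= n)%N -> forall x, u n x <-> u N x.
  apply: HC => [n | n x]; first exact: Fideal (svalP _).
  by have [+ _] := Hg (iter n g (exist _ I0 FI0)); apply.
have [_] := Hg (iter N g (exist _ I0 FI0)); apply=> x.
exact: (HN N.+1 (leqnSn N) x).1.
Qed.

Variable P : C -> Prop.
Hypothesis Pprime : is_prime_ideal P.

Lemma prime_idealX r k : P (r ^+ k) -> P r.
Proof.
case: Pprime => _ P1 Pmul; elim: k => [|k IH]; first by rewrite expr0.
by rewrite exprSr => /Pmul [/IH|].
Qed.

Lemma prime_idealMr s t : ~ P t -> P (s * t) <-> P s.
Proof.
case: Pprime => [[_ _ Pmull]] _ Pmul Pt; split; first by case/Pmul.
by move=> Ps; rewrite mulrC; apply: Pmull.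
Qed.

End IdealTheory.

Section DifferentialOperators.
Variables (A C : comPzRingType) (f : {rmorphism A -> C}).

Lemma in_DCA_mul (r : C) : in_DCA f (fun x => r * x).
Proof.
split=> [x y|a x|]; [exact: mulrDr | exact: mulrCA | by exists 0%N, r].
Qed.

Lemma diff_order_le_comp_mul n (p : C) (d : C -> C) :
  diff_order_le n d -> diff_order_le n (fun x => d (p * x)).
Proof.
elim: n d => [|n IH] d /=.
  by case=> r Hr; exists (r * p) => x; rewrite Hr mulrA.
case=> dD Hcomm; split=> [x y|r]; first by rewrite mulrDr dD.
have -> : (fun x => r * d (p * x) - d (p * (r * x))) =
          (fun x => (fun y => r * d y - d (r * y)) (p * x)).
  by apply: functional_extensionality => x; rewrite mulrCA.
exact: IH (Hcomm r).
Qed.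

Lemma in_DCA_comp_mul (p : C) (d : C -> C) :
  in_DCA f d -> in_DCA f (fun x => d (p * x)).
Proof.
case=> dD dA [n dn]; split=> [x y|a x|]; first by rewrite mulrDr dD.
  by rewrite mulrCA dA.
by exists n; apply: diff_order_le_comp_mul.
Qed.

Lemma in_DCA_commutator k (p : C) (d : C -> C) :
  in_DCA f d -> diff_order_le k.+1 d -> in_DCA f (fun x => p * d x - d (p * x)).
Proof.
case=> dD dA _ [_ Hcomm]; split=> [x y|a x|].
- by rewrite dD mulrDr mulrDr dD opprD addrACA.
- by rewrite dA mulrCA [p * (f a * x)]mulrCA dA -mulrBr.
- by exists k; apply: Hcomm.
Qed.

End DifferentialOperators.

Section Modules.
Variables (A C : comPzRingType) (f : {rmorphism A -> C}) (M : zmodType)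
  (act : (C -> C) -> M -> M).
Hypothesis Mmod : is_DCA_module f act.

Lemma actDr d : in_DCA f d -> forall x y, act d (x + y) = act d x + act d y.
Proof. by case: Mmod => _ H _ _ _; apply: H. Qed.

Lemma actDl d e : in_DCA f d -> in_DCA f e ->
  forall m, act (fun x => d x + e x) m = act d m + act e m.
Proof. by case: Mmod => _ _ H _ _; apply: H. Qed.

Lemma act_comp d e : in_DCA f d -> in_DCA f e ->
  forall m, act (fun x => d (e x)) m = act d (act e m).
Proof. by case: Mmod => _ _ _ H _; apply: H. Qed.

Lemma actBr d : in_DCA f d -> forall x y, act d (x - y) = act d x - act d y.
Proof. by move=> Hd x y; rewrite -{2}(subrK y x) actDr // addrK. Qed.

Lemma actr0 d : in_DCA f d -> act d 0 = 0.
Proof. by move=> Hd; rewrite -{1}(subrr 0) actBr // subrr. Qed.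

Lemma cactA r s m : cact act r (cact act s m) = cact act (r * s) m.
Proof.
rewrite /cact -(act_comp (in_DCA_mul f r) (in_DCA_mul f s)).
by congr act; apply: functional_extensionality => x; rewrite mulrA.
Qed.

Lemma cact1 m : cact act 1 m = m.
Proof.
rewrite /cact; have -> : (fun x : C => 1 * x) = id.
  by apply: functional_extensionality => x; rewrite mul1r.
by case: Mmod.
Qed.

Lemma cactDl r s m : cact act (r + s) m = cact act r m + cact act s m.
Proof.
rewrite /cact -(actDl (in_DCA_mul f r) (in_DCA_mul f s)).
by congr act; apply: functional_extensionality => x; rewrite mulrDl.
Qed.

Lemma cact0r m : cact act 0 m = 0.
Proof. by apply: (@addrI _ (cact act 0 m)); rewrite -cactDl !addr0. Qed.

Lemma cactr0 r : cact act r 0 = 0.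
Proof. exact/actr0/in_DCA_mul. Qed.

Lemma Dsubmodule0 : is_Dsubmodule f act (fun x => x = 0).
Proof. by split=> // [x y -> ->|d x Hd ->]; rewrite ?subr0 ?actr0. Qed.

Lemma DsubmoduleT : is_Dsubmodule f act (fun _ => True).
Proof. by []. Qed.

Definition ann (m : M) (r : C) : Prop := cact act r m = 0.

Lemma ann_ideal m : is_ideal (ann m).
Proof.
rewrite /ann; split=> [|x y Hx Hy|r x Hx]; first exact: cact0r.
  by rewrite cactDl Hx Hy addr0.
by rewrite -cactA Hx cactr0.
Qed.

Lemma ann_cact m x s : ann m s -> ann (cact act x m) s.
Proof. by rewrite /ann cactA mulrC -cactA => ->; rewrite cactr0. Qed.

Lemma ann_cact_prime P m t : is_prime_ideal P -> (forall s, P s <-> ann m s) ->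
  ~ P t -> forall s, P s <-> ann (cact act t m) s.
Proof.
move=> Pprime Pm Pt s; rewrite /ann cactA.
by have := prime_idealMr Pprime s Pt; have := Pm (s * t); rewrite /ann; tauto.
Qed.

Section Torsion.
Variables (S : M -> Prop) (P : C -> Prop).
Hypothesis Ssub : is_Dsubmodule f act S.

(* [tors n x]: p_1 ... p_n x lies in S for all p_i in P, i.e. P^n x is contained in S. *)
Fixpoint tors (n : nat) (x : M) : Prop :=
  if n is k.+1 then forall p, P p -> tors k (cact act p x) else S x.

Lemma S_act d x : in_DCA f d -> S x -> S (act d x).
Proof. by case: Ssub => _ _; apply. Qed.

Lemma torsS n x : S x -> tors n x.
Proof. by elim: n x => [|n IH] x Sx //= p _; apply/IH/S_act/Sx/in_DCA_mul. Qed.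

Lemma tors_succ n x : tors n x -> tors n.+1 x.
Proof.
elim: n x => [|n IH] x /= Hx p Pp; last by apply/IH/Hx.
exact/S_act/Hx/in_DCA_mul.
Qed.

Lemma tors_leq n m x : (n <= m)%N -> tors n x -> tors m x.
Proof.
move=> /subnK <-; elim: (m - n)%N => [|k IH] // Hx.
by rewrite addSn; apply/tors_succ/IH.
Qed.

Lemma torsB n x y : tors n x -> tors n y -> tors n (x - y).
Proof.
elim: n x y => [|n IH] x y /=; first by case: Ssub => _ + _; apply.
move=> Hx Hy p Pp; rewrite /cact (actBr (in_DCA_mul f p)).
by apply: IH; [apply: Hx | apply: Hy].
Qed.

Lemma tors0 n : tors n 0.
Proof. by apply: torsS; case: Ssub. Qed.

Lemma torsD n x y : tors n x -> tors n y -> tors n (x + y).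
Proof.
move=> Hx Hy; have -> : x + y = x - (0 - y) by rewrite sub0r opprK.
by apply: torsB => //; apply: torsB (tors0 n) Hy.
Qed.

Lemma tors_cact n r x : tors n x -> tors n (cact act r x).
Proof.
elim: n x => [|n IH] x /=; first exact/S_act/in_DCA_mul.
by move=> Hx p Pp; rewrite cactA mulrC -cactA; apply/IH/Hx.
Qed.

Lemma tors_act k d : in_DCA f d -> diff_order_le k d ->
  forall n x, tors n x -> tors (n + k) (act d x).
Proof.
elim: k d => [|k IHk] d Hd.
  case=> r dr n x Hx; rewrite addn0.
  have -> : d = (fun x => r * x) by apply: functional_extensionality.
  exact: tors_cact.
move=> dk; elim=> [|n IHn] x Hx; first exact/torsS/S_act.
rewrite addSn /= => p Pp.
have Hcomm := in_DCA_commutator p Hd dk.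
have Hcomp := in_DCA_comp_mul p Hd.
rewrite /cact -(act_comp (in_DCA_mul f p) Hd).
have -> : (fun y => p * d y) = (fun y => (p * d y - d (p * y)) + d (p * y)).
  by apply: functional_extensionality => y; rewrite subrK.
rewrite (actDl Hcomm Hcomp) (act_comp Hd (in_DCA_mul f p)).
apply: torsD; last exact/IHn/Hx.
by rewrite -addSnnS; apply: (IHk _ Hcomm (dk.2 p) n.+1 x Hx).
Qed.

Lemma tors_exp n x r : P r -> tors n x -> S (cact act (r ^+ n) x).
Proof.
move=> Pr; elim: n x => [|n IH] x /=; first by rewrite expr0 cact1.
by move=> Hx; rewrite exprSr -cactA; apply/IH/Hx.
Qed.

Lemma Dsubmodule_tors (T : M -> Prop) : is_Dsubmodule f act T ->
  is_Dsubmodule f act (fun x => T x /\ exists n, tors n x).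
Proof.
case=> T0 TB Tact; split.
- by split=> //; exists 0%N; case: Ssub.
- move=> x y [Tx [n Hx]] [Ty [m Hy]]; split; first exact: TB.
  by exists (n + m)%N; apply: torsB; [apply: tors_leq Hx | apply: tors_leq Hy];
    rewrite ?leq_addr ?leq_addl.
- move=> d x Hd [Tx [n Hx]]; split; first exact: Tact.
  by have [_ _ [k dk]] := Hd; exists (n + k)%N; apply: tors_act.
Qed.

End Torsion.

Lemma simple_step_tors S' S P m :
  is_Dsubmodule f act S' -> is_Dsubmodule f act S -> simple_step f act S' S ->
  S m -> ~ S' m -> (forall p, P p -> S' (cact act p m)) ->
  forall x, S x -> exists n, tors S' P n x.
Proof.
move=> S'sub Ssub [S'S _ Smax] Sm S'm Pm.
have Lsub := Dsubmodule_tors P S'sub Ssub.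
have [S'L|LS] : sub_pred (fun x => S x /\ exists n, tors S' P n x) S' \/
                sub_pred S (fun x => S x /\ exists n, tors S' P n x).
- by apply: Smax => // x; [split; [exact: S'S | exists 0%N] | case].
- by case: S'm; apply: S'L; split=> //; exists 1%N.
- by move=> x /LS [].
Qed.

Definition locally_nilpotent_mod (L N : M -> Prop) (r : C) : Prop :=
  forall x, N x -> exists k, L (cact act (r ^+ k) x).

Section CompositionSeries.
Variables (n : nat) (S : nat -> M -> Prop).
Hypotheses (Ssub : forall i, is_Dsubmodule f act (S i))
  (S0 : forall x, S 0%N x <-> x = 0)
  (Sstep : forall i, (i < n)%N -> simple_step f act (S i) (S i.+1)).

Lemma associated_prime_factor i P m : (i <= n)%N -> is_prime_ideal P ->
  (forall r, P r <-> ann m r) -> S i m ->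
  exists2 j, (j < i)%N & forall r, P r <-> locally_nilpotent_mod (S j) (S j.+1) r.
Proof.
elim: i P m => [|i IH] P m lt_in Pprime Pm Sm.
  have m0 : m = 0 by apply/S0.
  by case: Pprime => _ []; apply/Pm; rewrite m0 /ann cactr0.
have [Sim|Sim] := classic (S i m).
  by have [j ji Pj] := IH P m (ltnW lt_in) Pprime Pm Sim; exists j => //; apply: ltnW.
have [[r [rnil Pr]]|] :=
  classic (exists r, locally_nilpotent_mod (S i) (S i.+1) r /\ ~ P r).
  have [k Sk] := rnil m Sm.
  have Pk := ann_cact_prime Pprime Pm (fun Prk : P (r ^+ k) => Pr (prime_idealX Pprime Prk)).
  by have [j ji Pj] := IH P _ (ltnW lt_in) Pprime Pk Sk; exists j => //; apply: ltnW.
move=> nilP; exists i => // r; split=> [Pr x Sx|rnil].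
  have PmS p : P p -> S i (cact act p m) by move=> /Pm ->; case: (Ssub i).
  have [k Hk] := simple_step_tors (Ssub i) (Ssub i.+1) (Sstep lt_in) Sm Sim PmS Sx.
  by exists k; apply: tors_exp Hk.
by apply: NNPP => Pr; apply: nilP; exists r.
Qed.

End CompositionSeries.

Lemma exists_associated_prime : noetherian C -> (exists m : M, m <> 0) ->
  exists P, associated_prime act P.
Proof.
move=> HC [m0 m0_neq0].
pose F I := exists2 m, m <> 0 & I = ann m.
have [_ [m m_neq0 ->] ann_max] : exists2 I, F I &
    forall J, F J -> sub_pred I J -> sub_pred J I.
  apply: noetherian_maximal => //; last by exists (ann m0), m0.
  by move=> I [m _ ->]; apply: ann_ideal.
exists (ann m); split; last by exists m.
split; first exact: ann_ideal.
  by rewrite /ann cact1.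
move=> x y Hxy; have [|Hx] := classic (ann m x); first by left.
right; apply: (ann_max (ann (cact act x m))) => [|s|]; last first.
- by rewrite /ann cactA mulrC.
- exact: ann_cact.
- by exists (cact act x m).
Qed.

Lemma simple_associated_prime_sub P Q : simple_D f act ->
  associated_prime act P -> associated_prime act Q -> sub_pred P Q.
Proof.
case=> _ Msimple [Pprime [mP Pm]] [Qprime [mQ Qm]] r Pr.
have [tors_0|tors_all] :=
  Msimple _ (Dsubmodule_tors P Dsubmodule0 DsubmoduleT).
  case: Pprime => _ []; apply/Pm.
  by rewrite (tors_0 mP) ?cactr0 //; split=> //; exists 1%N => p /Pm.
have [_ [k Hk]] := tors_all mQ.
by apply: (prime_idealX Qprime (k := k)); apply/Qm; apply: tors_exp Hk.
Qed.

End Modules.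

Unset Implicit Arguments.
Theorem mainTheorem2 (A C : comPzRingType) (f : {rmorphism A -> C})
    (HC : noetherian C) :
  (forall (M : zmodType) (act : (C -> C) -> M -> M),
     is_DCA_module f act -> finite_length_D f act ->
     exists Ps : seq (C -> Prop),
       forall P, associated_prime act P ->
         exists2 Q, List.In Q Ps & forall r, P r <-> Q r) /\
  (forall (M : zmodType) (act : (C -> C) -> M -> M),
     is_DCA_module f act -> simple_D f act ->
     exists P, associated_prime act P /\
       forall Q, associated_prime act Q -> forall r, Q r <-> P r).
Proof.
split=> [M act Mmod [n [S [Ssub S0 Sn Sstep]]] | M act Mmod Msimple].
  exists (List.map (fun j => locally_nilpotent_mod act (S j) (S j.+1)) (List.seq 0 n)).
  move=> P [Pprime [m Pm]].
  have [j lt_jn Pj] := associated_prime_factor Mmod Ssub S0 Sstep (leqnn n) Pprime Pm (Sn m).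
  by exists (locally_nilpotent_mod act (S j) (S j.+1)) => //;
    apply/List.in_map/List.in_seq; split; [exact: le_0_n | exact/ltP].
have [P HP] := exists_associated_prime Mmod HC (proj1 Msimple).
exists P; split=> // Q HQ r.
by split; apply: (simple_associated_prime_sub Mmod Msimple).
Qed.
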